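(* Let $K$ be a field of characteristic $0$, $S=K[x_1,\ldots,x_n]$, and let $G$ be a finite simple graph on vertex set $[n]$ with edge set $E(G)$. Let $I\subset S$ be the vertex cover ideal of $G$, i.e. the ideal generated by all monomials $\prod_{i\in C}x_i$ with $C\subseteq[n]$ a vertex cover of $G$ (so $I=\bigcap_{\{i,j\}\in E(G)}(x_i,x_j)$), and let $I^{(m)}=\bigcap_{\{i,j\}\in E(G)}(x_i,x_j)^m$. Suppose that $(I^{(2)})^2\subseteq I^3$. Then $(I^{(k-1)})^2\subseteq I^k$ for all $k\ge2$. In particular, for every $k\ge 2$, every homogeneous ideal $J$ with $I^k\subseteq J\subseteq I^{(k)}$ is strongly Golod, i.e. $\partial(J)^2\subseteq J$, where $\partial(J)$ is the ideal generated by all $\partial f/\partial x_i$ with $f\in J$.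
   Context: A vertex cover of $G$ is a subset $C\subseteq[n]$ with $C\cap\{i,j\}\ne\emptyset$ for all edges $\{i,j\}$ of $G$. *)

From HB Require Import structures.
From mathcomp Require Import all_boot all_algebra.
From mathcomp Require Import multinomials.mpoly.
Set Implicit Arguments. Unset Strict Implicit. Unset Printing Implicit Defensive.
Import GRing.Theory.
Local Open Scope ring_scope.

Definition psubset (K : fieldType) (n : nat) := {mpoly K[n]} -> Prop.

Definition gen_ideal (K : fieldType) (n : nat) (A : psubset K n) : psubset K n :=
  fun f => exists s : seq ({mpoly K[n]} * {mpoly K[n]}),
    (forall p, p \in s -> A p.2) /\ f = \sum_(p <- s) p.1 * p.2.

Definition is_ideal (K : fieldType) (n : nat) (J : psubset K n) : Prop :=
  forall f, gen_ideal J f -> J f.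

Definition is_homogeneous_ideal (K : fieldType) (n : nat) (J : psubset K n) : Prop :=
  is_ideal J /\
  forall f, J f -> gen_ideal (fun h => J h /\ exists d : nat, h \is d.-homog) f.

Definition incl (K : fieldType) (n : nat) (I J : psubset K n) : Prop :=
  forall f, I f -> J f.

Definition ideal_mul (K : fieldType) (n : nat) (I J : psubset K n) : psubset K n :=
  gen_ideal (fun h => exists f g, I f /\ J g /\ h = f * g).

Fixpoint ideal_pow (K : fieldType) (n : nat) (I : psubset K n) (k : nat) : psubset K n :=
  match k with
  | 0 => gen_ideal (fun h => h = 1)
  | k'.+1 => ideal_mul (ideal_pow I k') I
  end.

Definition simple_graph (n : nat) (G : rel 'I_n) : Prop :=
  (forall i j, G i j = G j i) /\ (forall i, G i i = false).

Definition vertex_cover (n : nat) (G : rel 'I_n) (C : {set 'I_n}) : bool :=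
  [forall i, forall j, G i j ==> ((i \in C) || (j \in C))].

Definition cover_ideal (K : fieldType) (n : nat) (G : rel 'I_n) : psubset K n :=
  gen_ideal (fun h => exists C : {set 'I_n},
                 vertex_cover G C /\ h = \prod_(i in C) 'X_i).

Definition symb_power (K : fieldType) (n : nat) (G : rel 'I_n) (m : nat) : psubset K n :=
  fun f => forall i j : 'I_n, G i j ->
    ideal_pow (gen_ideal (fun h : {mpoly K[n]} => h = 'X_i \/ h = 'X_j)) m f.

Definition deriv_ideal (K : fieldType) (n : nat) (J : psubset K n) : psubset K n :=
  gen_ideal (fun h => exists (f : {mpoly K[n]}) (i : 'I_n), J f /\ h = mderiv i f).

Definition strongly_golod (K : fieldType) (n : nat) (J : psubset K n) : Prop :=
  incl (ideal_pow (deriv_ideal J) 2) J.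

Arguments cover_ideal K {n} G.
Arguments symb_power K {n} G m.

From HB Require Import structures.
From mathcomp Require Import all_boot all_algebra.
From mathcomp Require Import multinomials.mpoly.
From mathcomp Require Import zify.
Set Implicit Arguments. Unset Strict Implicit. Unset Printing Implicit Defensive.
Import GRing.Theory.
Local Open Scope ring_scope.

(* All ideals involved are monomial, so everything reduces to exponent vectors:
   x^m lies in I^(k) iff m_i + m_j >= k on every edge, and in I^k iff m
   dominates a sum of k indicator vectors of vertex covers.  The hypothesis is
   the case k = 2 of "if c1, c2 satisfy the edge bound k then c1 + c2 is a sum
   of k + 1 covers".  For odd k the vertices with 2 c_i >= k form a cover that
   can be peeled off each c, leaving the edge bound k - 1; for even k >= 4 one
   peels off an exponent with edge bound 2 (weight 2 where 2 c_i > k, 1 where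
   2 c_i = k), leaving the edge bound k - 2.  For the second claim, a partial
   derivative lowers every edge weight by at most one, so the derivative ideal
   of J lies in I^(k-1) and its square in I^k, which is inside J. *)

Section IdealGeneration.
Variables (K : fieldType) (n : nat).
Implicit Types (A B : psubset K n) (f g h : {mpoly K[n]}).

Lemma gen_ideal_base A h : A h -> gen_ideal A h.
Proof.
move=> Ah; exists [:: (1, h)]; split; last by rewrite big_seq1 mul1r.
by move=> p; rewrite inE => /eqP->.
Qed.

Lemma gen_ideal0 A : gen_ideal A 0.
Proof. by exists [::]; rewrite big_nil. Qed.

Lemma gen_idealD A f g : gen_ideal A f -> gen_ideal A g -> gen_ideal A (f + g).
Proof.
move=> [s [Hs ->]] [t [Ht ->]]; exists (s ++ t); split; last by rewrite big_cat.
by move=> p; rewrite mem_cat => /orP[/Hs|/Ht].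
Qed.

Lemma gen_idealMl A f g : gen_ideal A g -> gen_ideal A (f * g).
Proof.
move=> [s [Hs ->]]; exists [seq (f * p.1, p.2) | p <- s]; split.
  by move=> p /mapP[q /Hs Hq ->].
by rewrite big_map big_distrr /=; apply: eq_bigr => p _; rewrite mulrA.
Qed.

Lemma gen_ideal_idem A f : gen_ideal (gen_ideal A) f -> gen_ideal A f.
Proof.
move=> [s [Hs ->]]; elim: s Hs => [|p s IHs] Hs; first by rewrite big_nil; apply: gen_ideal0.
rewrite big_cons; apply: gen_idealD; first by apply/gen_idealMl/Hs; rewrite mem_head.
by apply: IHs => q Hq; apply: Hs; rewrite inE Hq orbT.
Qed.

Lemma ideal_pow_gen A k f : gen_ideal (ideal_pow A k) f -> ideal_pow A k f.
Proof. by case: k => [|k] /gen_ideal_idem. Qed.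

Lemma ideal_mul_mem A B f g : A f -> B g -> ideal_mul A B (f * g).
Proof. by move=> Af Bg; apply: gen_ideal_base; exists f, g. Qed.

Lemma ideal_pow0_mem A f : ideal_pow A 0 f.
Proof. by rewrite -[f]mulr1; apply/gen_idealMl/gen_ideal_base. Qed.

End IdealGeneration.

Section MonomialSupport.
Variables (K : fieldType) (n : nat).
Implicit Types (P Q : 'X_{1..n} -> Prop) (A : psubset K n) (f g : {mpoly K[n]}).

Definition supp_in P f := forall m, m \in msupp f -> P m.

Definition upward_closed P := forall m m', P m -> P (m + m')%MM.

Lemma supp_in_gen_ideal P A :
  upward_closed P -> incl A (supp_in P) -> incl (gen_ideal A) (supp_in P).
Proof.
move=> upP AP f [s [Hs ->]] m /msupp_sum_le /flattenP[ms /mapP[p ps ->]].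
move=> /msuppM_le /allpairsP[[m1 m2] /= [_ m2s ->]]; rewrite addmC; apply: upP.
by rewrite filter_predT in ps; apply: AP (Hs _ ps) _ m2s.
Qed.

Lemma supp_in_ideal_mul P Q (R : 'X_{1..n} -> Prop) A B :
  upward_closed R -> (forall a b, P a -> Q b -> R (a + b)%MM) ->
  incl A (supp_in P) -> incl B (supp_in Q) -> incl (ideal_mul A B) (supp_in R).
Proof.
move=> upR PQR AP BQ; apply: supp_in_gen_ideal => // _ [f [g [Af [Bg ->]]]] m.
by move=> /msuppM_le /allpairsP[[a b] /= [af bg ->]]; apply: PQR; [apply: AP af | apply: BQ bg].
Qed.

Lemma supp_in_mpolyX P m : supp_in P ('X_[m] : {mpoly K[n]}) -> P m.
Proof. by apply; rewrite msuppX mem_seq1. Qed.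

Lemma ideal_pow_supp_in P A k f :
  (forall m, P m -> ideal_pow A k 'X_[m]) -> supp_in P f -> ideal_pow A k f.
Proof.
move=> PA Pf; apply: ideal_pow_gen.
exists [seq ((f@_m)%:MP, 'X_[m]) | m <- msupp f]; split.
  by move=> p /mapP[m ms ->]; apply/PA/Pf.
by rewrite big_map [LHS](mpolyE f); apply: eq_bigr => m _; rewrite mul_mpolyC.
Qed.

End MonomialSupport.

Lemma mnm_leq_split n (a m : 'X_{1..n}) :
  (forall i, a i <= m i)%N -> exists r, m = (a + r)%MM.
Proof. by move=> am; exists (m - a)%MM; apply/mnmP => i; rewrite mnmDE mnmBE subnKC. Qed.

Section CoverExponents.
Variables (n : nat) (G : rel 'I_n).
Local Close Scope ring_scope.
Implicit Types (a b c d m u : 'X_{1..n}).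

Definition symb_exp k m := forall i j, G i j -> k <= m i + m j.

Fixpoint cover_exp k m : Prop :=
  if k is k'.+1 then exists a (C : {set 'I_n}),
    [/\ cover_exp k' a, vertex_cover G C & forall i, a i + (i \in C) <= m i]
  else True.

Lemma vertex_coverP (C : {set 'I_n}) :
  vertex_cover G C <-> forall i j, G i j -> (i \in C) || (j \in C).
Proof.
split=> [/forallP coverC i j Gij | coverC].
  by move/forallP/(_ j)/implyP: (coverC i); apply.
by apply/forallP => i; apply/forallP => j; apply/implyP; apply: coverC.
Qed.

Lemma symb_exp_mono k a m : symb_exp k a -> (forall i, a i <= m i) -> symb_exp k m.
Proof. by move=> Sa am i j Gij; apply: leq_trans (Sa i j Gij) (leq_add _ _). Qed.

Lemma cover_exp_mono k a m : cover_exp k a -> (forall i, a i <= m i) -> cover_exp k m.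
Proof.
case: k => [//|k] [b [C [Tb coverC bC]]] am; exists b, C; split=> // i.
exact: leq_trans (bC i) (am i).
Qed.

Lemma cover_expD k l a b : cover_exp k a -> cover_exp l b -> cover_exp (k + l) (a + b)%MM.
Proof.
elim: l b => [|l IHl] b Ta.
  by rewrite addn0 => _; apply: cover_exp_mono Ta _ => i; rewrite mnmDE leq_addr.
move=> [b' [C [Tb' coverC b'C]]]; rewrite addnS; exists (a + b')%MM, C.
by split=> [|//|i]; [apply: IHl | rewrite !mnmDE -addnA leq_add2l].
Qed.

Lemma cover_exp_leq k l m : l <= k -> cover_exp k m -> cover_exp l m.
Proof.
move=> lk; rewrite -(subnK lk); elim: (k - l) => [//|d IHd] [a [C [Ta _ aC]]].
by apply/IHd/(cover_exp_mono Ta) => i; apply: leq_trans (aC i); apply: leq_addr.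
Qed.

Lemma symb_exp1_cover c : symb_exp 1 c -> cover_exp 1 c.
Proof.
move=> Sc; exists 0%MM, [set i | 0 < c i]; split=> //.
  by apply/vertex_coverP => i j /Sc; rewrite !inE; lia.
by move=> i; rewrite mnm0E inE add0n; case: (c i).
Qed.

(* Removing C costs each edge at most 1 because 2 c_i = k is impossible for odd k. *)
Lemma symb_exp_odd_split k c : odd k -> symb_exp k c ->
  exists (C : {set 'I_n}) d,
    [/\ vertex_cover G C, symb_exp k.-1 d & forall i, d i + (i \in C) <= c i].
Proof.
move=> oddk Sc; pose C := [set i | k <= (c i).*2].
have half_neq i : (c i).*2 != k by apply: contraTneq oddk => <-; rewrite odd_double.
exists C, [multinom c i - (i \in C) | i < n]; split.
- by apply/vertex_coverP => i j /Sc; rewrite !inE; lia.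
- move=> i j /[dup] Gij /Sc; move: (half_neq i) (half_neq j); rewrite !mnmE !inE.
  by case: leqP; case: leqP => /=; lia.
- by move=> i; rewrite mnmE inE; case: leqP => /=; lia.
Qed.

Lemma symb_exp_even_split k c : ~~ odd k -> 2 <= k -> symb_exp k c ->
  exists u d, [/\ symb_exp 2 u, symb_exp (k - 2) d & forall i, u i + d i <= c i].
Proof.
move=> evenk k_ge2 Sc.
pose w i := if k < (c i).*2 then 2 else if k == (c i).*2 then 1 else 0.
have k_even : k = (k./2).*2 by rewrite -[LHS]odd_double_half (negbTE evenk).
exists [multinom w i | i < n], [multinom c i - w i | i < n]; split.
- move=> i j /Sc; rewrite !mnmE /w.
  by case: (ltngtP k (c i).*2); case: (ltngtP k (c j).*2); lia.
- move=> i j /Sc; rewrite !mnmE /w.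
  by case: (ltngtP k (c i).*2); case: (ltngtP k (c j).*2); lia.
- by move=> i; rewrite !mnmE /w; case: (ltngtP k (c i).*2); lia.
Qed.

Hypothesis symb_exp2D : forall u v, symb_exp 2 u -> symb_exp 2 v -> cover_exp 3 (u + v)%MM.

Lemma cover_exp_symb_expD k c1 c2 : 0 < k ->
  symb_exp k c1 -> symb_exp k c2 -> cover_exp k.+1 (c1 + c2)%MM.
Proof.
elim/ltn_ind: k c1 c2 => -[|[|[|k]]] IHk c1 c2 // _ S1 S2.
- by apply: (@cover_expD 1 1); apply: symb_exp1_cover.
- exact: symb_exp2D.
case/boolP: (odd k.+3) => oddk.
- have [C1 [d1 [coverC1 Sd1 dC1]]] := symb_exp_odd_split oddk S1.
  have [C2 [d2 [_ Sd2 dC2]]] := symb_exp_odd_split oddk S2.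
  exists (d1 + d2)%MM, C1; split=> // [|i]; first exact: IHk.
  by rewrite !mnmDE; move: (dC1 i) (dC2 i); lia.
- have [u1 [d1 [Su1 Sd1 ud1]]] := symb_exp_even_split oddk isT S1.
  have [u2 [d2 [Su2 Sd2 ud2]]] := symb_exp_even_split oddk isT S2.
  have Td : cover_exp k.+2 (d1 + d2)%MM by apply: (IHk k.+1) => //; lia.
  have Tud := cover_expD (symb_exp2D Su1 Su2) Td.
  apply: cover_exp_mono (cover_exp_leq _ Tud) _ => [|i]; first by [].
  by rewrite !mnmDE; move: (ud1 i) (ud2 i); lia.
Qed.

End CoverExponents.

Section MonomialDescription.
Variables (K : fieldType) (n : nat) (G : rel 'I_n).

Let edge_ideal (i j : 'I_n) : psubset K n :=
  gen_ideal (fun h : {mpoly K[n]} => h = 'X_i \/ h = 'X_j).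

Definition edge_exp k (i j : 'I_n) (m : 'X_{1..n}) := (k <= m i + m j)%N.

Lemma edge_exp_upward k i j : upward_closed (edge_exp k i j).
Proof. by move=> m m'; rewrite /edge_exp !mnmDE; lia. Qed.

Lemma edge_ideal_pow_supp i j k : incl (ideal_pow (edge_ideal i j) k) (supp_in (edge_exp k i j)).
Proof.
elim: k => [|k IHk]; first by move=> f _ m _; rewrite /edge_exp.
apply: (supp_in_ideal_mul (Q := edge_exp 1 i j) (@edge_exp_upward k.+1 i j) _ IHk).
  by move=> a b; rewrite /edge_exp !mnmDE; lia.
apply: supp_in_gen_ideal; first exact: edge_exp_upward.
by move=> _ [->|->] m; rewrite msuppX mem_seq1 => /eqP->; rewrite /edge_exp !mnm1E eqxx; lia.
Qed.

Lemma mpolyX_in_edge_ideal_pow i j k m :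
  i != j -> edge_exp k i j m -> ideal_pow (edge_ideal i j) k 'X_[m].
Proof.
move=> ij; elim: k m => [|k IHk] m mE; first exact: ideal_pow0_mem.
have [l [lij ml]] : exists l, [/\ l = i \/ l = j & (0 < m l)%N].
  case: (posnP (m i)) => [mi0 | mi_gt0]; last by exists i; split; first left.
  by exists j; split; [right | move: mE; rewrite /edge_exp mi0; lia].
have [r mE'] : exists r, m = (U_(l) + r)%MM.
  by apply: mnm_leq_split => l'; rewrite mnm1E; case: eqP => // <-.
subst m; rewrite addmC mpolyXD; apply: ideal_mul_mem; last by apply: gen_ideal_base; case: lij => ->; auto.
apply: IHk; move: mE; rewrite /edge_exp !mnmDE !mnm1E.
by case: lij => ->; rewrite eqxx ?(negbTE ij) 1?eq_sym ?(negbTE ij); lia.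
Qed.

Lemma symb_power_supp k : incl (symb_power K G k) (supp_in (symb_exp G k)).
Proof. by move=> f fS m ms i j Gij; apply: (edge_ideal_pow_supp (fS i j Gij)). Qed.

Lemma mpolyX_in_symb_power k m :
  simple_graph G -> symb_exp G k m -> symb_power K G k 'X_[m].
Proof.
move=> [_ irrG] Sm i j Gij; apply: mpolyX_in_edge_ideal_pow; last exact: Sm.
by apply: contraTneq Gij => ->; rewrite irrG.
Qed.

Lemma mnm_indicatorE (C : {set 'I_n}) i : (\sum_(l in C) U_(l))%MM i = (i \in C).
Proof.
rewrite mnm_sumE; have [iC | iNC] := boolP (i \in C).
  rewrite (bigD1 i) //= mnm1E eqxx big1 // => l /andP[_ li].
  by rewrite mnm1E (negbTE li).
by rewrite big1 // => l lC; rewrite mnm1E; case: eqP => // li; rewrite -li lC in iNC.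
Qed.

Lemma symb_exp_upward k : upward_closed (symb_exp G k).
Proof. by move=> m m' Sm; apply: symb_exp_mono Sm _ => i; rewrite mnmDE leq_addr. Qed.

Lemma cover_exp_upward k : upward_closed (cover_exp G k).
Proof. by move=> m m' Tm; apply: cover_exp_mono Tm _ => i; rewrite mnmDE leq_addr. Qed.

Lemma cover_ideal_pow_supp k :
  incl (ideal_pow (cover_ideal K G) k) (supp_in (cover_exp G k)).
Proof.
elim: k => [|k IHk]; first by move=> f _ m _.
apply: (supp_in_ideal_mul (Q := cover_exp G 1) (@cover_exp_upward k.+1) _ IHk).
  by move=> a b Ta Tb; rewrite -addn1; apply: cover_expD.
apply: supp_in_gen_ideal; first exact: cover_exp_upward.
move=> _ [C [coverC ->]] m; rewrite mprodXE msuppX mem_seq1 => /eqP->.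
by exists 0%MM, C; split=> // i; rewrite mnm0E mnm_indicatorE.
Qed.

Lemma mpolyX_in_cover_ideal_pow k m :
  cover_exp G k m -> ideal_pow (cover_ideal K G) k 'X_[m].
Proof.
elim: k m => [|k IHk] m; first by move=> _; apply: ideal_pow0_mem.
move=> [a [C [Ta coverC aC]]].
have [r mE] : exists r, m = (a + \sum_(l in C) U_(l) + r)%MM.
  by apply: mnm_leq_split => i; rewrite mnmDE mnm_indicatorE.
have -> : m = (r + a + \sum_(l in C) U_(l))%MM by apply/mnmP => i; rewrite mE !mnmDE; lia.
rewrite !mpolyXD; apply: ideal_mul_mem.
  exact/ideal_pow_gen/gen_idealMl/gen_ideal_base/IHk.
by apply: gen_ideal_base; exists C; rewrite mprodXE.
Qed.

Lemma cover_exp3_symb_exp2D :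
  simple_graph G ->
  incl (ideal_pow (symb_power K G 2) 2) (ideal_pow (cover_ideal K G) 3) ->
  forall u v, symb_exp G 2 u -> symb_exp G 2 v -> cover_exp G 3 (u + v)%MM.
Proof.
move=> simpleG sq_sub u v Su Sv; apply: (@supp_in_mpolyX K).
apply/cover_ideal_pow_supp/sq_sub; rewrite mpolyXD.
rewrite -[_ * _]mul1r mulrA; apply: ideal_mul_mem; last exact: mpolyX_in_symb_power.
by apply: ideal_mul_mem; [apply: gen_ideal_base | apply: mpolyX_in_symb_power].
Qed.

Lemma square_sub_cover_ideal_pow k (A : psubset K n) :
  (forall u v, symb_exp G 2 u -> symb_exp G 2 v -> cover_exp G 3 (u + v)%MM) ->
  (2 <= k)%N -> incl A (supp_in (symb_exp G k.-1)) ->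
  incl (ideal_pow A 2) (ideal_pow (cover_ideal K G) k).
Proof.
move=> symb_exp2D k_ge2 AS f fA.
apply: (ideal_pow_supp_in (P := cover_exp G k)); first exact: mpolyX_in_cover_ideal_pow.
case: k k_ge2 AS fA => [|[|k]] // _ AS fA.
apply: (supp_in_ideal_mul (P := symb_exp G k.+1) (Q := symb_exp G k.+1)) fA => //.
- exact: cover_exp_upward.
- by move=> a b; apply: cover_exp_symb_expD.
- apply: (supp_in_ideal_mul (P := fun=> True) (Q := symb_exp G k.+1)) AS => //.
    exact: symb_exp_upward.
  by move=> a b _ Sb; rewrite addmC; apply: symb_exp_upward.
Qed.

(* The coefficient of x^m in d f / d x_l is (m_l + 1) times that of x^(m + e_l). *)
Lemma deriv_ideal_supp k (J : psubset K n) :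
  simple_graph G -> incl J (symb_power K G k) ->
  incl (deriv_ideal J) (supp_in (symb_exp G k.-1)).
Proof.
move=> [_ irrG] JS; apply: supp_in_gen_ideal; first exact: symb_exp_upward.
move=> _ [f [l [Jf ->]]] m ms i j Gij.
have ij : i != j by apply: contraTneq Gij => ->; rewrite irrG.
have : (m + U_(l))%MM \in msupp f.
  apply: contraLR ms; rewrite -!mcoeff_eq0 => /eqP f0.
  by rewrite mcoeff_deriv f0 mul0rn.
move/(symb_power_supp (JS _ Jf))/(_ i j Gij); rewrite !mnmDE !mnm1E.
have : ((l == i) + (l == j) <= 1)%N.
  by case: (l =P i) => [li|]; case: (l =P j) => [lj|] //; rewrite -li -lj eqxx in ij.
lia.
Qed.

End MonomialDescription.

Theorem proposition2p8 (K : fieldType) (n : nat) (G : rel 'I_n) :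
  [pchar K] =i pred0 ->
  simple_graph G ->
  incl (ideal_pow (symb_power K G 2) 2) (ideal_pow (cover_ideal K G) 3) ->
  (forall k : nat, (2 <= k)%N ->
     incl (ideal_pow (symb_power K G k.-1) 2) (ideal_pow (cover_ideal K G) k)) /\
  (forall k : nat, (2 <= k)%N -> forall J : psubset K n,
     is_homogeneous_ideal J ->
     incl (ideal_pow (cover_ideal K G) k) J ->
     incl J (symb_power K G k) ->
     strongly_golod J).
Proof.
move=> _ simpleG sq_sub; have symb_exp2D := cover_exp3_symb_exp2D simpleG sq_sub.
split=> [k k_ge2 | k k_ge2 J _ coverJ Jsymb f fJ].
  exact/(square_sub_cover_ideal_pow symb_exp2D k_ge2)/symb_power_supp.
apply/coverJ/(square_sub_cover_ideal_pow symb_exp2D k_ge2 _ fJ).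
exact: deriv_ideal_supp.
Qed.
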